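(* For norm-one $a,b\in\mathbb{O}$, the algebras ${}^*\mathbb{O}_l(a,1)$ and ${}^*\mathbb{O}_l(b,1)$ are isomorphic if and only if $|\mathrm{Re}(a)|=|\mathrm{Re}(b)|$.
   Context: $\mathbb{O}$ is the real octonion algebra; $\mathrm{Re}(a)$ is the real part of $a$ (its component along $1$ in $\mathbb{O}=\mathbb{R}\oplus\mathrm{Im}(\mathbb{O})$), and $\bar x$ is conjugation. For norm-one $a$, ${}^*\mathbb{O}_l(a,1)$ is the normed space of $\mathbb{O}$ with product $x\odot y=(\bar x a)y$. *)

From HB Require Import structures.
From mathcomp Require Import all_boot all_order all_algebra.
From mathcomp Require Import reals.
Set Implicit Arguments. Unset Strict Implicit. Unset Printing Implicit Defensive.
Import Order.TTheory GRing.Theory Num.Theory.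
Local Open Scope ring_scope.

Section Octonions.
Variable R : realType.

(* Quaternions: q0 + q1 i + q2 j + q3 k *)
Record quat := Quat { q0 : R; q1 : R; q2 : R; q3 : R }.

Definition qadd (a b : quat) : quat :=
  Quat (q0 a + q0 b) (q1 a + q1 b) (q2 a + q2 b) (q3 a + q3 b).
Definition qopp (a : quat) : quat := Quat (- q0 a) (- q1 a) (- q2 a) (- q3 a).
Definition qscale (r : R) (a : quat) : quat :=
  Quat (r * q0 a) (r * q1 a) (r * q2 a) (r * q3 a).
Definition qconj (a : quat) : quat := Quat (q0 a) (- q1 a) (- q2 a) (- q3 a).
Definition qmul (a b : quat) : quat :=
  Quat (q0 a * q0 b - q1 a * q1 b - q2 a * q2 b - q3 a * q3 b)
       (q0 a * q1 b + q1 a * q0 b + q2 a * q3 b - q3 a * q2 b)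
       (q0 a * q2 b - q1 a * q3 b + q2 a * q0 b + q3 a * q1 b)
       (q0 a * q3 b + q1 a * q2 b - q2 a * q1 b + q3 a * q0 b).
Definition qnorm2 (a : quat) : R := q0 a ^+ 2 + q1 a ^+ 2 + q2 a ^+ 2 + q3 a ^+ 2.

(* Octonions as pairs (a, b) of quaternions, Cayley-Dickson:
   (a,b)(c,d) = (ac - conj(d) b, d a + b conj(c)),  conj(a,b) = (conj a, -b). *)
Record oct := Oct { o1 : quat; o2 : quat }.

Definition oadd (x y : oct) : oct := Oct (qadd (o1 x) (o1 y)) (qadd (o2 x) (o2 y)).
Definition oscale (r : R) (x : oct) : oct := Oct (qscale r (o1 x)) (qscale r (o2 x)).
Definition oconj (x : oct) : oct := Oct (qconj (o1 x)) (qopp (o2 x)).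
Definition omul (x y : oct) : oct :=
  Oct (qadd (qmul (o1 x) (o1 y)) (qopp (qmul (qconj (o2 y)) (o2 x))))
      (qadd (qmul (o2 y) (o1 x)) (qmul (o2 x) (qconj (o1 y)))).

Definition oRe (x : oct) : R := q0 (o1 x).
Definition onorm2 (x : oct) : R := qnorm2 (o1 x) + qnorm2 (o2 x).

(* The product of *O_l(a,1):  x (.) y = (conj(x) a) y *)
Definition lstar (a x y : oct) : oct := omul (omul (oconj x) a) y.

Definition lstar_isomorphic (a b : oct) : Prop :=
  exists f : oct -> oct,
    bijective f /\
    (forall x y, f (oadd x y) = oadd (f x) (f y)) /\
    (forall (r : R) x, f (oscale r x) = oscale r (f x)) /\
    (forall x y, f (lstar a x y) = lstar b (f x) (f y)).

End Octonions.

From mathcomp Require Import all_boot all_order all_algebra.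
From mathcomp Require Import reals ring lra.
Import Order.TTheory GRing.Theory Num.Theory.
Set Implicit Arguments. Unset Strict Implicit. Unset Printing Implicit Defensive.
Local Open Scope ring_scope.

(* An isomorphism [f] from the product of [a] to that of [b] sends the left unit
   [a] to the left unit [b]; since [(conj x a) a = conj x (a a)], it then
   intertwines the real-linear maps [T_c x = conj x c] for [c = a^2] and [c = b^2].
   For a unit [c], [T_c] swaps [1] and [c] and rotates their orthogonal complement
   by the angle whose cosine is [-Re c], so [T_c^2 + 2 t T_c + 1] has a nonzero kernel
   for [t = Re c] and is injective for every other [t] with [t^2 <> 1]. Hence
   [Re (a^2) = Re (b^2)], i.e. [|Re a| = |Re b|], unless [a^2] and [b^2] are
   [1] and [-1], which are told apart by the fixed spaces of [T_1] (the reals)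
   and [T_(-1)] (the imaginary octonions).
   Conversely, an automorphism [phi] of the octonions is an isomorphism from the
   product of [a] to that of [phi a], the automorphism group acts transitively on
   the octonions of given real part and norm, and [x |-> -x] relates [a] and [-a]. *)

Section Octonions.
Variable R : realType.
Implicit Types (x y z u v a b c d : oct R) (p q : quat R).

Definition qzero : quat R := Quat 0 0 0 0.
Definition ozero : oct R := Oct qzero qzero.
Definition oone : oct R := Oct (Quat 1 0 0 0) qzero.
Definition oim x : oct R := Oct (Quat 0 (q1 (o1 x)) (q2 (o1 x)) (q3 (o1 x))) (o2 x).
Definition oe1 : oct R := Oct (Quat 0 1 0 0) qzero.
Definition oe2 : oct R := Oct (Quat 0 0 1 0) qzero.

Lemma oct_eq x y :
  q0 (o1 x) = q0 (o1 y) -> q1 (o1 x) = q1 (o1 y) ->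
  q2 (o1 x) = q2 (o1 y) -> q3 (o1 x) = q3 (o1 y) ->
  q0 (o2 x) = q0 (o2 y) -> q1 (o2 x) = q1 (o2 y) ->
  q2 (o2 x) = q2 (o2 y) -> q3 (o2 x) = q3 (o2 y) -> x = y.
Proof. by case: x => [[????] [????]]; case: y => [[????] [????]] /= -> -> -> -> -> -> -> ->. Qed.

Ltac oct_ring :=
  repeat match goal with
  | x : oct _ |- _ => destruct x as [[? ? ? ?] [? ? ? ?]]
  | p : quat _ |- _ => destruct p as [? ? ? ?]
  end;
  try (apply: oct_eq || congr Quat); rewrite /= ?/oRe ?/onorm2 ?/qnorm2 /=; ring.

Lemma oscale1 x : oscale 1 x = x.                 Proof. oct_ring. Qed.
Lemma oscale0 x : oscale 0 x = ozero.             Proof. oct_ring. Qed.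
Lemma oscaleA t1 t2 x : oscale t1 (oscale t2 x) = oscale (t1 * t2) x.
Proof. oct_ring. Qed.
Lemma oscaleDr t x y : oscale t (oadd x y) = oadd (oscale t x) (oscale t y).
Proof. oct_ring. Qed.
Lemma oscale_eq0 t x : t != 0 -> oscale t x = ozero -> x = ozero.
Proof.
move=> t0 e; rewrite -[x]oscale1 -(mulVf t0) -oscaleA e.
by rewrite /oscale /qscale /= !mulr0.
Qed.
Lemma oconjK x : oconj (oconj x) = x.             Proof. oct_ring. Qed.
Lemma oconj_scale t x : oconj (oscale t x) = oscale t (oconj x).
Proof. oct_ring. Qed.
Lemma omul0r x : omul ozero x = ozero.            Proof. oct_ring. Qed.
Lemma omul1r x : omul oone x = x.                 Proof. oct_ring. Qed.
Lemma omulr1 x : omul x oone = x.                 Proof. oct_ring. Qed.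
Lemma omul_scalel t x y : omul (oscale t x) y = oscale t (omul x y).
Proof. oct_ring. Qed.
Lemma omul_scale t1 t2 x y :
  omul (oscale t1 x) (oscale t2 y) = oscale (t1 * t2) (omul x y).
Proof. oct_ring. Qed.
Lemma omul_alt_r x c : omul (omul x c) c = omul x (omul c c).
Proof. oct_ring. Qed.
Lemma omul_conjr x c : omul (omul x c) (oconj c) = oscale (onorm2 c) x.
Proof. oct_ring. Qed.
Lemma omul_conjr' x c : omul (omul x (oconj c)) c = oscale (onorm2 c) x.
Proof. oct_ring. Qed.
Lemma omul_conj_self c : omul (oconj c) c = oscale (onorm2 c) oone.
Proof. oct_ring. Qed.
Lemma onorm2_mul x y : onorm2 (omul x y) = onorm2 x * onorm2 y.
Proof. oct_ring. Qed.
Lemma onorm2_scale t x : onorm2 (oscale t x) = t ^+ 2 * onorm2 x.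
Proof. oct_ring. Qed.
Lemma onorm2_im x : onorm2 (oim x) = onorm2 x - oRe x ^+ 2.
Proof. oct_ring. Qed.
Lemma oRe_sqr a : oRe (omul a a) = 2 * oRe a ^+ 2 - onorm2 a.
Proof. oct_ring. Qed.
Lemma oaddx0 x : oadd x ozero = x.
Proof. oct_ring. Qed.
Lemma oct_Re_im x : x = oadd (oscale (oRe x) oone) (oim x).
Proof. oct_ring. Qed.

Lemma oconj_fixed_real z : oconj z = z -> z = oscale (oRe z) oone.
Proof.
case: z => [[z0 z1 z2 z3] [z4 z5 z6 z7]] e.
have /= := congr1 (fun z => q1 (o1 z)) e; have /= := congr1 (fun z => q2 (o1 z)) e.
have /= := congr1 (fun z => q3 (o1 z)) e; have /= := congr1 (fun z => q0 (o2 z)) e.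
have /= := congr1 (fun z => q1 (o2 z)) e; have /= := congr1 (fun z => q2 (o2 z)) e.
have /= := congr1 (fun z => q3 (o2 z)) e.
by move=> *; rewrite /oRe; apply: oct_eq => /=; lra.
Qed.

Lemma sqr_eq0 (t : R) : t ^+ 2 = 0 -> t = 0.
Proof. by move/eqP; rewrite sqrf_eq0 => /eqP. Qed.

Lemma qnorm2_ge0 q : 0 <= qnorm2 q.
Proof. by case: q => ????; rewrite /qnorm2 /= !addr_ge0 ?sqr_ge0. Qed.

Lemma qnorm2_eq0 q : qnorm2 q = 0 -> q = qzero.
Proof.
case: q => q0 q1 q2 q3; rewrite /qnorm2 /= => N.
have := sqr_ge0 q0; have := sqr_ge0 q1; have := sqr_ge0 q2; have := sqr_ge0 q3 => *.
have -> : q0 = 0 by apply: sqr_eq0; lra.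
have -> : q1 = 0 by apply: sqr_eq0; lra.
have -> : q2 = 0 by apply: sqr_eq0; lra.
by have -> : q3 = 0 by apply: sqr_eq0; lra.
Qed.

Lemma onorm2_eq0 x : onorm2 x = 0 -> x = ozero.
Proof.
case: x => p q; rewrite /onorm2 /= => N.
have := qnorm2_ge0 p; have := qnorm2_ge0 q => *.
have /qnorm2_eq0 -> : qnorm2 p = 0 by lra.
by have /qnorm2_eq0 -> : qnorm2 q = 0 by lra.
Qed.

Lemma unit_Re_sqr1 c : onorm2 c = 1 -> oRe c ^+ 2 = 1 -> c = oscale (oRe c) oone.
Proof.
move=> Nc Rc; have /onorm2_eq0 im0 : onorm2 (oim c) = 0 by rewrite onorm2_im Nc Rc subrr.
by rewrite {1}(oct_Re_im c) im0 oaddx0.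
Qed.

Definition conjmul c x := omul (oconj x) c.

Definition quadT c t x :=
  oadd (conjmul c (conjmul c x)) (oadd (oscale (2 * t) (conjmul c x)) x).

Definition quadW c t x :=
  oadd (omul (oconj c) x) (oadd (oscale (2 * t) (oconj x)) (omul x (oconj c))).

Lemma quadT_mul_conj c t x : omul (quadT c t x) (oconj c) =
  oadd (oscale (onorm2 c) (omul (oconj c) x))
       (oadd (oscale (2 * t * onorm2 c) (oconj x)) (omul x (oconj c))).
Proof. rewrite /quadT /conjmul; oct_ring. Qed.

Lemma quadT_eq0 c t x : onorm2 c = 1 ->
  (quadT c t x = ozero) <-> (quadW c t x = ozero).
Proof.
move=> Nc; split => [T0 | W0].
  by have := quadT_mul_conj c t x; rewrite T0 omul0r Nc mulr1 oscale1.
rewrite -[quadT c t x]oscale1 -Nc -omul_conjr' quadT_mul_conj Nc mulr1 oscale1.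
by rewrite -/(quadW c t x) W0 omul0r.
Qed.

Lemma oRe_quadW_mul c t y :
  oRe (omul (quadW c t y) (oadd c (oscale (- t) oone))) =
  2 * oRe y * (onorm2 c - t ^+ 2).
Proof. rewrite /quadW; oct_ring. Qed.

Lemma oim_quadW c t y : oRe y = 0 -> oim (quadW c t y) = oscale (2 * (oRe c - t)) y.
Proof. case: y => [[y0 ? ? ?] ?]; rewrite /oRe /= => ->; rewrite /quadW /oim; oct_ring. Qed.

Lemma quadW_inj c t y : onorm2 c = 1 -> t != oRe c -> t ^+ 2 != 1 ->
  quadW c t y = ozero -> y = ozero.
Proof.
move=> Nc tc t2 W0.
have y0 : oRe y = 0.
  have := oRe_quadW_mul c t y; rewrite W0 omul0r Nc => /esym/eqP.
  by rewrite !mulf_eq0 subr_eq0 pnatr_eq0 [_ == t ^+ 2]eq_sym (negbTE t2) orbF => /eqP.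
have := oim_quadW c t y0; rewrite W0 => /esym/oscale_eq0; apply.
by rewrite mulf_neq0 ?pnatr_eq0 // subr_eq0 eq_sym.
Qed.

Lemma quadW_Re_kernel c : exists2 x, x <> ozero & quadW c (oRe c) x = ozero.
Proof.
case: c => [[c0 c1 c2 c3] [c4 c5 c6 c7]].
have [c10 | c1n0] := eqVneq c1 0.
  exists oe1; first by move/(congr1 (fun z => q1 (o1 z))) => /= /eqP; rewrite oner_eq0.
  rewrite c10 /quadW /oRe; apply: oct_eq => /=; ring.
exists (Oct (Quat 0 c2 (- c1) 0) qzero).
  by move/(congr1 (fun z => q2 (o1 z))) => /= /eqP; rewrite oppr_eq0; apply/negP.
rewrite /quadW /oRe; apply: oct_eq => /=; ring.
Qed.

Section Intertwining.
Variables (f : oct R -> oct R) (c d : oct R).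
Hypothesis f_add : forall x y, f (oadd x y) = oadd (f x) (f y).
Hypothesis f_scale : forall t x, f (oscale t x) = oscale t (f x).
Hypothesis f_inj : injective f.
Hypothesis f_conjmul : forall x, f (conjmul c x) = conjmul d (f x).

Lemma intertwine0 : f ozero = ozero.
Proof. by rewrite -{1}(oscale0 ozero) f_scale oscale0. Qed.

Lemma intertwine_quadT t x : f (quadT c t x) = quadT d t (f x).
Proof. by rewrite /quadT !f_add f_scale !f_conjmul. Qed.

(* A kernel vector of [quadT c (oRe c)] is sent to one of [quadT d (oRe c)],
   which is injective unless [oRe d = oRe c]. *)
Lemma intertwine_Re : onorm2 c = 1 -> onorm2 d = 1 -> oRe c ^+ 2 != 1 ->
  oRe c = oRe d.
Proof.
move=> Nc Nd c2; have [// | cd] := eqVneq (oRe c) (oRe d); exfalso.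
have [x x0 Wx] := quadW_Re_kernel c.
have /(quadT_eq0 _ _ Nd) : quadT d (oRe c) (f x) = ozero.
  by rewrite -intertwine_quadT (proj2 (quadT_eq0 _ _ Nc) Wx) intertwine0.
move/(quadW_inj Nd cd c2) => fx0; apply: x0; apply: f_inj.
by rewrite fx0 intertwine0.
Qed.

(* [conjmul (-1)] fixes the 7-dimensional space of imaginary octonions while
   [conjmul 1 = oconj] fixes only the reals, so [f] cannot be injective. *)
Lemma intertwine_neg1_1 : c = oscale (-1) oone -> d <> oone.
Proof.
move=> ec ed.
have real_img e : conjmul c e = e -> exists t, f e = oscale t oone.
  move=> he; exists (oRe (f e)); apply: oconj_fixed_real.
  by rewrite -{2}he f_conjmul ed /conjmul omulr1.
have /real_img [t1 f1] : conjmul c oe1 = oe1.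
  by rewrite ec /conjmul; apply: oct_eq => /=; ring.
have /real_img [t2 f2] : conjmul c oe2 = oe2.
  by rewrite ec /conjmul; apply: oct_eq => /=; ring.
have : f (oadd (oscale t2 oe1) (oscale (- t1) oe2)) = f ozero.
  rewrite f_add !f_scale f1 f2 intertwine0 !oscaleA.
  by apply: oct_eq => /=; ring.
move/f_inj/(congr1 (fun z => q2 (o1 z))) => /= /eqP t10.
have : f oe1 = f ozero by rewrite f1 intertwine0; apply: oct_eq => /=; lra.
by move/f_inj/(congr1 (fun z => q1 (o1 z))) => /= /eqP; rewrite oner_eq0.
Qed.

End Intertwining.

Definition lstar_hom a b (f : oct R -> oct R) :=
  [/\ forall x y, f (oadd x y) = oadd (f x) (f y),
      forall t x, f (oscale t x) = oscale t (f x) &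
      forall x y, f (lstar a x y) = lstar b (f x) (f y)].

Lemma lstar_unitl a y : onorm2 a = 1 -> lstar a a y = y.
Proof. by move=> Na; rewrite /lstar omul_conj_self Na omul_scalel omul1r oscale1. Qed.

Lemma oconj_mul_unit_eq1 z b : onorm2 b = 1 -> omul (oconj z) b = oone -> z = b.
Proof.
move=> Nb zb; have := omul_conjr (oconj z) b; rewrite zb Nb oscale1 omul1r => e.
by rewrite -(oconjK z) -e oconjK.
Qed.

Lemma lstar_hom_unit a b f : onorm2 a = 1 -> onorm2 b = 1 ->
  lstar_hom a b f -> (forall y, exists x, f x = y) -> f a = b.
Proof.
move=> Na Nb [_ _ f_lstar] f_surj; have [x fx1] := f_surj oone.
apply: oconj_mul_unit_eq1 => //.
by have := f_lstar a x; rewrite lstar_unitl // fx1 /lstar omulr1 => <-.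
Qed.

Lemma lstar_hom_conjmul a b f : lstar_hom a b f -> f a = b ->
  forall x, f (conjmul (omul a a) x) = conjmul (omul b b) (f x).
Proof. by case=> _ _ f_lstar fa x; rewrite /conjmul -!omul_alt_r -/(lstar a x a) f_lstar fa. Qed.

Lemma lstar_isomorphic_Re_sqr a b : onorm2 a = 1 -> onorm2 b = 1 ->
  lstar_isomorphic a b -> oRe (omul a a) = oRe (omul b b).
Proof.
move=> Na Nb [f [[g fK gK] [f_add [f_scale f_lstar]]]].
have fhom : lstar_hom a b f by [].
have ghom : lstar_hom b a g.
  split=> [x y | t x | x y]; apply: (can_inj fK); by rewrite gK ?f_add ?f_scale ?f_lstar !gK.
have surj h k : cancel k h -> forall y, exists x, h x = y by move=> hK y; exists (k y).
have f_conjmul := lstar_hom_conjmul fhom (lstar_hom_unit Na Nb fhom (surj _ _ gK)).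
have g_conjmul := lstar_hom_conjmul ghom (lstar_hom_unit Nb Na ghom (surj _ _ fK)).
have [f_inj g_inj] := (can_inj fK, can_inj gK).
have [g_add g_scale _] := ghom.
have Naa : onorm2 (omul a a) = 1 by rewrite onorm2_mul Na mulr1.
have Nbb : onorm2 (omul b b) = 1 by rewrite onorm2_mul Nb mulr1.
have [a2 | a2] := eqVneq (oRe (omul a a) ^+ 2) 1; last first.
  exact: intertwine_Re f_add f_scale f_inj f_conjmul Naa Nbb a2.
have [b2 | b2] := eqVneq (oRe (omul b b) ^+ 2) 1; last first.
  by apply/esym; apply: intertwine_Re g_add g_scale g_inj g_conjmul Nbb Naa b2.
have ea := unit_Re_sqr1 Naa a2; have eb := unit_Re_sqr1 Nbb b2.
move/eqP: a2; move/eqP: b2; rewrite !sqrf_eq1 => /orP[]/eqP rb /orP[]/eqP ra.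
all: rewrite ?ra ?rb //; rewrite ra ?oscale1 in ea; rewrite rb ?oscale1 in eb.
- by case: (intertwine_neg1_1 f_add f_scale f_inj f_conjmul ea eb).
- by case: (intertwine_neg1_1 g_add g_scale g_inj g_conjmul eb ea).
Qed.

Record oct_aut (phi : oct R -> oct R) : Prop := OctAut {
  aut_add : forall x y, phi (oadd x y) = oadd (phi x) (phi y);
  aut_scale : forall t x, phi (oscale t x) = oscale t (phi x);
  aut_mul : forall x y, phi (omul x y) = omul (phi x) (phi y);
  aut_conj : forall x, phi (oconj x) = oconj (phi x);
  aut_one : phi oone = oone;
  aut_norm : forall x, onorm2 (phi x) = onorm2 x;
  aut_bij : bijective phi }.

Lemma oct_aut_id : oct_aut id.
Proof. by split => //; exists id. Qed.

Lemma oct_aut_comp phi psi : oct_aut phi -> oct_aut psi -> oct_aut (psi \o phi).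
Proof.
case=> add1 sc1 mul1 conj1 one1 norm1 bij1 [add2 sc2 mul2 conj2 one2 norm2 bij2].
split => /=; last exact: bij_comp.
- by move=> x y; rewrite add1 add2.
- by move=> t x; rewrite sc1 sc2.
- by move=> x y; rewrite mul1 mul2.
- by move=> x; rewrite conj1 conj2.
- by rewrite one1 one2.
- by move=> x; rewrite norm2 norm1.
Qed.

Lemma oct_aut_inv phi : oct_aut phi -> exists2 psi, oct_aut psi & cancel phi psi.
Proof.
case=> add1 sc1 mul1 conj1 one1 norm1 [psi phiK psiK]; exists psi => //.
split; last by exists phi.
- by move=> x y; apply: (can_inj phiK); rewrite psiK add1 !psiK.
- by move=> t x; apply: (can_inj phiK); rewrite psiK sc1 !psiK.
- by move=> x y; apply: (can_inj phiK); rewrite psiK mul1 !psiK.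
- by move=> x; apply: (can_inj phiK); rewrite psiK conj1 !psiK.
- by apply: (can_inj phiK); rewrite psiK one1.
- by move=> x; rewrite -{2}(psiK x) norm1.
Qed.

Lemma oct_aut_lstar_isomorphic phi a : oct_aut phi -> lstar_isomorphic a (phi a).
Proof.
case=> add1 sc1 mul1 conj1 _ _ bij1; exists phi; do 3!split => //.
by move=> x y; rewrite /lstar !mul1 conj1.
Qed.

Lemma qnorm2_conj q : qnorm2 (qconj q) = qnorm2 q.
Proof. oct_ring. Qed.

Lemma qconjK q : qconj (qconj q) = q.
Proof. oct_ring. Qed.

Lemma qnorm2_scale t q : qnorm2 (qscale t q) = t ^+ 2 * qnorm2 q.
Proof. oct_ring. Qed.

Lemma qmul_conj_scale t q : qmul (qscale t (qconj q)) q = Quat (t * qnorm2 q) 0 0 0.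
Proof. oct_ring. Qed.

Definition oct_lmul2 (s : quat R) x := Oct (o1 x) (qmul s (o2 x)).

Lemma oct_lmul2_mul s x y : omul (oct_lmul2 s x) (oct_lmul2 s y) =
  oadd (oct_lmul2 s (omul x y))
       (Oct (qscale (1 - qnorm2 s) (qmul (qconj (o2 y)) (o2 x))) qzero).
Proof. rewrite /oct_lmul2; oct_ring. Qed.

Lemma oct_lmul2K s x :
  oct_lmul2 (qconj s) (oct_lmul2 s x) = oadd x (Oct qzero (qscale (qnorm2 s - 1) (o2 x))).
Proof. rewrite /oct_lmul2; oct_ring. Qed.

Lemma onorm2_lmul2 s x :
  onorm2 (oct_lmul2 s x) = onorm2 x + (qnorm2 s - 1) * qnorm2 (o2 x).
Proof. rewrite /oct_lmul2; oct_ring. Qed.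

Lemma qscale0 q : qscale 0 q = qzero.
Proof. oct_ring. Qed.

Lemma oct_aut_lmul2 s : qnorm2 s = 1 -> oct_aut (oct_lmul2 s).
Proof.
move=> Ns; split.
- by move=> x y; rewrite /oct_lmul2; oct_ring.
- by move=> t x; rewrite /oct_lmul2; oct_ring.
- by move=> x y; rewrite oct_lmul2_mul Ns subrr qscale0 oaddx0.
- by move=> x; rewrite /oct_lmul2; oct_ring.
- by rewrite /oct_lmul2; oct_ring.
- by move=> x; rewrite onorm2_lmul2 Ns subrr mul0r addr0.
- exists (oct_lmul2 (qconj s)) => x; first by rewrite oct_lmul2K Ns subrr qscale0 oaddx0.
  by rewrite -{1}(qconjK s) oct_lmul2K qnorm2_conj Ns subrr qscale0 oaddx0.
Qed.

Definition oct_qconjg_raw (r : quat R) x :=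
  Oct (qmul (qmul r (o1 x)) (qconj r)) (qmul (qmul r (o2 x)) (qconj r)).

(* Conjugation of both halves by [r]; dividing by [|r|^2] avoids normalising [r]. *)
Definition oct_qconjg (r : quat R) x := oscale (qnorm2 r)^-1 (oct_qconjg_raw r x).

Lemma oct_qconjg_raw_add r x y :
  oct_qconjg_raw r (oadd x y) = oadd (oct_qconjg_raw r x) (oct_qconjg_raw r y).
Proof. rewrite /oct_qconjg_raw; oct_ring. Qed.
Lemma oct_qconjg_raw_scale r t x :
  oct_qconjg_raw r (oscale t x) = oscale t (oct_qconjg_raw r x).
Proof. rewrite /oct_qconjg_raw; oct_ring. Qed.
Lemma oct_qconjg_raw_mul r x y : omul (oct_qconjg_raw r x) (oct_qconjg_raw r y) =
  oscale (qnorm2 r) (oct_qconjg_raw r (omul x y)).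
Proof. rewrite /oct_qconjg_raw; oct_ring. Qed.
Lemma oct_qconjg_raw_conj r x : oct_qconjg_raw r (oconj x) = oconj (oct_qconjg_raw r x).
Proof. rewrite /oct_qconjg_raw; oct_ring. Qed.
Lemma oct_qconjg_raw_one r : oct_qconjg_raw r oone = oscale (qnorm2 r) oone.
Proof. rewrite /oct_qconjg_raw; oct_ring. Qed.
Lemma onorm2_qconjg_raw r x : onorm2 (oct_qconjg_raw r x) = qnorm2 r ^+ 2 * onorm2 x.
Proof. rewrite /oct_qconjg_raw; oct_ring. Qed.
Lemma oct_qconjg_rawK r x :
  oct_qconjg_raw (qconj r) (oct_qconjg_raw r x) = oscale (qnorm2 r ^+ 2) x.
Proof. rewrite /oct_qconjg_raw; oct_ring. Qed.

Lemma oct_aut_qconjg r : qnorm2 r != 0 -> oct_aut (oct_qconjg r).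
Proof.
move=> Nr; rewrite /oct_qconjg; split.
- by move=> x y; rewrite oct_qconjg_raw_add oscaleDr.
- by move=> t x; rewrite oct_qconjg_raw_scale !oscaleA mulrC.
- move=> x y; rewrite omul_scale oct_qconjg_raw_mul oscaleA.
  by congr oscale; field.
- by move=> x; rewrite oct_qconjg_raw_conj oconj_scale.
- by rewrite oct_qconjg_raw_one oscaleA mulVf // oscale1.
- by move=> x; rewrite onorm2_scale onorm2_qconjg_raw mulrA -exprMn mulVf // expr1n mul1r.
- have K r' : qnorm2 r' != 0 -> cancel (oct_qconjg r') (oct_qconjg (qconj r')).
    move=> Nr' x; rewrite /oct_qconjg oct_qconjg_raw_scale oct_qconjg_rawK !oscaleA.
    by rewrite qnorm2_conj -[RHS]oscale1; congr oscale; field.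
  exists (oct_qconjg (qconj r)); first exact: K.
  have Nr' : qnorm2 (qconj r) != 0 by rewrite qnorm2_conj.
  by have := K _ Nr'; rewrite qconjK.
Qed.

(* A signed permutation of the imaginary units sending [(i, 0)] to [(0, 1)]
   and [(0, 1)] to [(0, j)]. *)
Definition oct_perm x :=
  Oct (Quat (q0 (o1 x)) (q2 (o1 x)) (q1 (o2 x)) (q3 (o2 x)))
      (Quat (q1 (o1 x)) (- q3 (o1 x)) (q0 (o2 x)) (- q2 (o2 x))).

Lemma oct_aut_perm : oct_aut oct_perm.
Proof.
rewrite /oct_perm; split; try by move=> *; oct_ring.
exists (fun y => Oct (Quat (q0 (o1 y)) (q0 (o2 y)) (q1 (o1 y)) (- q1 (o2 y)))
                     (Quat (q2 (o2 y)) (q2 (o1 y)) (- q3 (o2 y)) (q3 (o1 y)))) => x; oct_ring.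
Qed.

Lemma oct_aut_snd_real p q :
  exists2 phi, oct_aut phi & phi (Oct p q) = Oct p (Quat (Num.sqrt (qnorm2 q)) 0 0 0).
Proof.
have [q0 | qn0] := eqVneq (qnorm2 q) 0.
  by exists id; rewrite ?q0 ?sqrtr0 ?(qnorm2_eq0 q0) //; apply: oct_aut_id.
have n2 : Num.sqrt (qnorm2 q) ^+ 2 = qnorm2 q by rewrite sqr_sqrtr // qnorm2_ge0.
have nn0 : Num.sqrt (qnorm2 q) != 0 by rewrite sqrtr_eq0 -ltNge lt_def qn0 qnorm2_ge0.
set s := qscale (Num.sqrt (qnorm2 q))^-1 (qconj q).
have Ns : qnorm2 s = 1 by rewrite qnorm2_scale qnorm2_conj exprVn n2 mulVf.
exists (oct_lmul2 s); first exact: oct_aut_lmul2.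
rewrite /oct_lmul2 /s /= qmul_conj_scale -{2}n2; congr (Oct _ (Quat _ _ _ _)).
by field.
Qed.

Lemma oct_aut_fst_axis p t : q0 p = 0 ->
  exists m, exists2 phi, oct_aut phi &
    phi (Oct p (Quat t 0 0 0)) = Oct (Quat 0 m 0 0) (Quat t 0 0 0).
Proof.
case: p => p0 p1 p2 p3 /= ->.
set m := Num.sqrt (p1 ^+ 2 + p2 ^+ 2 + p3 ^+ 2).
have m2 : m ^+ 2 = p1 ^+ 2 + p2 ^+ 2 + p3 ^+ 2.
  by rewrite sqr_sqrtr // !addr_ge0 ?sqr_ge0.
(* Conjugation by [r] rotates [p] onto [|p| i]; [r] vanishes only when [p] is
   already a multiple of [i], which is fine as [m] may be any real. *)
set r := Quat (m + p1) 0 p3 (- p2).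
have [r0 | rn0] := eqVneq (qnorm2 r) 0.
  have [_ p30 /eqP] := qnorm2_eq0 r0; rewrite oppr_eq0 => /eqP p20.
  by exists p1, id; rewrite ?p20 ?p30 //; apply: oct_aut_id.
exists m, (oct_qconjg r); first exact: oct_aut_qconjg.
rewrite /oct_qconjg; have -> : oct_qconjg_raw r (Oct (Quat 0 p1 p2 p3) (Quat t 0 0 0)) =
  Oct (qadd (Quat 0 (m * qnorm2 r) 0 0)
            (qscale (p1 ^+ 2 + p2 ^+ 2 + p3 ^+ 2 - m ^+ 2) (qmul (Quat 0 1 0 0) (qconj r))))
      (Quat (t * qnorm2 r) 0 0 0).
  by rewrite /oct_qconjg_raw /r /qnorm2; apply: oct_eq => /=; ring.
rewrite -m2 subrr qscale0.
by apply: oct_eq => /=; field.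
Qed.

Lemma oct_aut_imag_axis u : oRe u = 0 ->
  exists2 phi, oct_aut phi & phi u = Oct qzero (Quat (Num.sqrt (onorm2 u)) 0 0 0).
Proof.
case: u => p q p0.
have [phi1 aut1 e1] := oct_aut_snd_real p q.
have [m [phi2 aut2 e2]] := oct_aut_fst_axis (Num.sqrt (qnorm2 q)) p0.
have e_perm : oct_perm (Oct (Quat 0 m 0 0) (Quat (Num.sqrt (qnorm2 q)) 0 0 0)) =
  Oct qzero (Quat m 0 (Num.sqrt (qnorm2 q)) 0) by rewrite /oct_perm /= oppr0.
have [phi3 aut3 e3] := oct_aut_snd_real qzero (Quat m 0 (Num.sqrt (qnorm2 q)) 0).
set n := Num.sqrt (qnorm2 (Quat m 0 _ 0)) in e3.
have aut : oct_aut (phi3 \o oct_perm \o phi2 \o phi1).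
  by do 3!apply: oct_aut_comp => //; exact: oct_aut_perm.
exists (phi3 \o oct_perm \o phi2 \o phi1) => //.
have e : (phi3 \o oct_perm \o phi2 \o phi1) (Oct p q) = Oct qzero (Quat n 0 0 0).
  by rewrite /= e1 e2 e_perm e3.
rewrite e -(aut_norm aut) e.
have -> : onorm2 (Oct qzero (Quat n 0 0 0)) = n ^+ 2 by rewrite /onorm2 /qnorm2 /=; ring.
by rewrite sqrtr_sqr ger0_norm ?sqrtr_ge0.
Qed.

Lemma oct_aut_transitive u v : oRe u = oRe v -> onorm2 u = onorm2 v ->
  exists2 phi, oct_aut phi & phi u = v.
Proof.
move=> Re_uv N_uv.
have [phiu autu eu] := oct_aut_imag_axis (u := oim u) erefl.
have [phiv autv ev] := oct_aut_imag_axis (u := oim v) erefl.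
have [psi autpsi phivK] := oct_aut_inv autv.
exists (psi \o phiu); first exact: oct_aut_comp.
rewrite /= {1}(oct_Re_im u) (aut_add autu) (aut_scale autu) (aut_one autu) eu.
rewrite onorm2_im N_uv Re_uv -onorm2_im -ev.
by rewrite (aut_add autpsi) (aut_scale autpsi) (aut_one autpsi) phivK -oct_Re_im.
Qed.

Lemma lstar_isomorphic_opp a : lstar_isomorphic a (oscale (-1) a).
Proof.
exists (oscale (-1)); split.
  by exists (oscale (-1)) => x; rewrite oscaleA mulrNN mulr1 oscale1.
by split; [| split]; [move=> x y | move=> t x | move=> x y]; rewrite /lstar; oct_ring.
Qed.

Lemma lstar_isomorphic_trans a b c :
  lstar_isomorphic a b -> lstar_isomorphic b c -> lstar_isomorphic a c.
Proof.
move=> [f [f_bij [f_add [f_scale f_lstar]]]] [g [g_bij [g_add [g_scale g_lstar]]]].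
exists (g \o f); split; first exact: bij_comp.
by split; [| split]; [move=> x y | move=> t x | move=> x y];
  rewrite /= ?f_add ?g_add ?f_scale ?g_scale ?f_lstar ?g_lstar.
Qed.

Lemma lstar_isomorphic_Re_abs a b : onorm2 a = onorm2 b -> `|oRe a| = `|oRe b| ->
  lstar_isomorphic a b.
Proof.
move=> N_ab /eqP; rewrite eqr_norm2 => /orP[/eqP Re_ab | /eqP Re_ab].
  by have [phi autphi <-] := oct_aut_transitive Re_ab N_ab; exact: oct_aut_lstar_isomorphic.
apply: lstar_isomorphic_trans (lstar_isomorphic_opp a) _.
have [|| phi autphi <-] := @oct_aut_transitive (oscale (-1) a) b.
- by rewrite /oRe /= mulN1r -/(oRe a) Re_ab opprK.
- by rewrite onorm2_scale sqrrN expr1n mul1r.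
- exact: oct_aut_lstar_isomorphic.
Qed.

End Octonions.

Theorem corollary1 (R : realType) (a b : oct R) :
  onorm2 a = 1 -> onorm2 b = 1 ->
  (lstar_isomorphic a b <-> `|oRe a| = `|oRe b|).
Proof.
move=> Na Nb; split => [iso_ab | Re_ab].
  have := lstar_isomorphic_Re_sqr Na Nb iso_ab; rewrite !oRe_sqr Na Nb => e.
  have {}e : oRe a ^+ 2 = oRe b ^+ 2 by lra.
  by rewrite -!sqrtr_sqr e.
by apply: lstar_isomorphic_Re_abs; rewrite ?Na ?Nb.
Qed.
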